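(* Fix $\mu>0$, $\rho>0$ and $s\in\mathbb{R}^m$. For $a,b\in\mathbb{R}$ let $w(a,b;\mu,\rho)=\frac{1}{2\rho}\big(\sqrt{(b-\rho a)^2+4\rho\mu}-(b-\rho a)\big)$. Consider the logarithmic-barrier subproblem $$(\mathrm{LB})\quad \min_{x\in\mathbb{R}^n,\ z\in\mathbb{R}^m_{++}}\ f(x)-\mu\sum_{i=1}^m\ln z_i\quad\text{s.t.}\quad c(x)-z=0,$$ and the modified problem $$(\mathrm{MB}_s)\quad \min_{x\in\mathbb{R}^n}\ f(x)-\mu\sum_{i=1}^m\ln w(c_i(x),s_i;\mu,\rho)\quad\text{s.t.}\quad c_i(x)-w(c_i(x),s_i;\mu,\rho)=0,\ i=1,\dots,m.$$ (1) If $(x^*,z^* )$ is a local solution of (LB) and $c_i(x^* )=w(c_i(x^* ),s_i;\mu,\rho)$ for $i=1,\dots,m$, then $x^*$ is a local solution of $(\mathrm{MB}_s)$. (2) Suppose $((x^*,z^* ),s^* )$ is a KKT pair of (LB), i.e. $c(x^* )=z^*>0$, $\nabla f(x^* )-\nabla c(x^* )s^*=0$ and $s_i^*=\mu/z_i^*$ for all $i$. Then $c_i(x^* )=w(c_i(x^* ),s_i^*;\mu,\rho)$ for all $i$, and $x^*$ is a KKT point of $(\mathrm{MB}_{s^*})$ with Lagrange multiplier $s_i^*$ associated with the constraint $c_i(x)-w(c_i(x),s_i^*;\mu,\rho)=0$; that is, $\nabla_x L(x^*,s^*,s^* )=0$, where $$L(x,s,\lambda)=f(x)-\mu\sum_{i=1}^m\ln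 w(c_i(x),s_i;\mu,\rho)-\sum_{i=1}^m\lambda_i\big(c_i(x)-w(c_i(x),s_i;\mu,\rho)\big).$$
   Context: $f:\mathbb{R}^n\to\mathbb{R}$ and $c=(c_1,\dots,c_m):\mathbb{R}^n\to\mathbb{R}^m$ are twice continuously differentiable; $\nabla c(x)\in\mathbb{R}^{n\times m}$ denotes the matrix whose $i$-th column is $\nabla c_i(x)$. $\mathbb{R}^m_{++}$ denotes vectors with all components positive. Note $w(a,b;\mu,\rho)>0$ for all $a,b$. *)

From HB Require Import structures.
From mathcomp Require Import all_boot all_order all_algebra.
From mathcomp Require Import all_classical all_reals all_analysis.
Set Implicit Arguments. Unset Strict Implicit. Unset Printing Implicit Defensive.
Import Order.TTheory GRing.Theory Num.Theory.
Import numFieldNormedType.Exports.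
Local Open Scope ring_scope.

Section Defs.
Variable R : realType.

Definition ebasis (n : nat) (j : 'I_n) : 'cV[R]_n := delta_mx j 0.

Definition ccomp (n m : nat) (c : 'cV[R]_n -> 'cV[R]_m) (i : 'I_m) : 'cV[R]_n -> R :=
  fun x => c x i 0.

Definition partial (n : nat) (j : 'I_n) (g : 'cV[R]_n -> R) : 'cV[R]_n -> R :=
  fun x => derive g x (ebasis j).

Definition C2 (n : nat) (g : 'cV[R]_n -> R) : Prop :=
  continuous g /\
  (forall j x, derivable g x (ebasis j)) /\
  (forall j, continuous (partial j g)) /\
  (forall j k x, derivable (partial j g) x (ebasis k)) /\
  (forall j k, continuous (partial k (partial j g))).

Definition grad (n : nat) (g : 'cV[R]_n -> R) (x : 'cV[R]_n) : 'cV[R]_n :=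
  \col_j partial j g x.

Definition gradc (n m : nat) (c : 'cV[R]_n -> 'cV[R]_m) (x : 'cV[R]_n) : 'M[R]_(n, m) :=
  \matrix_(j, i) partial j (ccomp c i) x.

Definition w (a b mu rho : R) : R :=
  (Num.sqrt ((b - rho * a) ^+ 2 + 4 * rho * mu) - (b - rho * a)) / (2 * rho).

Definition LB_obj (n m : nat) (f : 'cV[R]_n -> R) (mu : R) (x : 'cV[R]_n) (z : 'cV[R]_m) : R :=
  f x - mu * \sum_(i < m) ln (z i 0).

Definition LB_feasible (n m : nat) (c : 'cV[R]_n -> 'cV[R]_m) (x : 'cV[R]_n) (z : 'cV[R]_m) : Prop :=
  (forall i, 0 < z i 0) /\ c x - z = 0.

Definition LB_local_sol (n m : nat) (f : 'cV[R]_n -> R) (c : 'cV[R]_n -> 'cV[R]_m) (mu : R)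
    (xs : 'cV[R]_n) (zs : 'cV[R]_m) : Prop :=
  LB_feasible c xs zs /\
  exists eps : R, 0 < eps /\
    forall x z, `|x - xs| < eps -> `|z - zs| < eps -> LB_feasible c x z ->
      LB_obj f mu xs zs <= LB_obj f mu x z.

Definition MB_obj (n m : nat) (f : 'cV[R]_n -> R) (c : 'cV[R]_n -> 'cV[R]_m) (mu rho : R)
    (s : 'cV[R]_m) (x : 'cV[R]_n) : R :=
  f x - mu * \sum_(i < m) ln (w (ccomp c i x) (s i 0) mu rho).

Definition MB_feasible (n m : nat) (c : 'cV[R]_n -> 'cV[R]_m) (mu rho : R) (s : 'cV[R]_m)
    (x : 'cV[R]_n) : Prop :=
  forall i, ccomp c i x - w (ccomp c i x) (s i 0) mu rho = 0.

Definition MB_local_sol (n m : nat) (f : 'cV[R]_n -> R) (c : 'cV[R]_n -> 'cV[R]_m) (mu rho : R)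
    (s : 'cV[R]_m) (xs : 'cV[R]_n) : Prop :=
  MB_feasible c mu rho s xs /\
  exists eps : R, 0 < eps /\
    forall x, `|x - xs| < eps -> MB_feasible c mu rho s x ->
      MB_obj f c mu rho s xs <= MB_obj f c mu rho s x.

Definition MB_L (n m : nat) (f : 'cV[R]_n -> R) (c : 'cV[R]_n -> 'cV[R]_m) (mu rho : R)
    (x : 'cV[R]_n) (s lam : 'cV[R]_m) : R :=
  f x - mu * \sum_(i < m) ln (w (ccomp c i x) (s i 0) mu rho)
      - \sum_(i < m) lam i 0 * (ccomp c i x - w (ccomp c i x) (s i 0) mu rho).

Definition LB_KKT (n m : nat) (f : 'cV[R]_n -> R) (c : 'cV[R]_n -> 'cV[R]_m) (mu : R)
    (xs : 'cV[R]_n) (zs ss : 'cV[R]_m) : Prop :=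
  c xs = zs /\ (forall i, 0 < zs i 0) /\
  grad f xs - gradc c xs *m ss = 0 /\
  (forall i, ss i 0 = mu / zs i 0).

End Defs.

From HB Require Import structures.
From mathcomp Require Import all_boot all_order all_algebra.
From mathcomp Require Import all_classical all_reals all_analysis.
From mathcomp Require Import ring.
Import Order.TTheory GRing.Theory Num.Theory.
Import numFieldNormedType.Exports.
Local Open Scope ring_scope.
Set Implicit Arguments. Unset Strict Implicit. Unset Printing Implicit Defensive.

(* The whole argument rests on the map w(., s) and two facts about it:
   w > 0 everywhere, and for z > 0 the point z is a fixed point of
   w(., mu/z) (the radicand becomes the square (mu/z + rho z)^2).

   Part (1): on the feasible set of (MB_s) we have c_i(x) = w(c_i(x), s_i) > 0,
   so (x, c(x)) is feasible for (LB) with the same objective value; continuity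
   of c keeps c(x) close to zs = c(xs) near xs, so local optimality transfers.

   Part (2): with multipliers equal to s, the Lagrangian of (MB_s) is
   f - sum_i g_i o c_i with g_i(a) = mu ln w(a, s_i) + s_i (a - w(a, s_i)).
   We have g_i'(a) = s_i + w'(a) (mu / w(a) - s_i), which equals s_i at the
   fixed point a = c_i(xs) = mu / s_i; by the chain rule the gradient of the
   Lagrangian is grad f - (grad c) s, zero by the KKT conditions of (LB). *)

Section MatrixNorm.
Variable R : realType.

Lemma mx_norm_lt (p q : nat) (M : 'M[R]_(p, q)) (e : R) :
  0 < e -> (forall i j, `|M i j| < e) -> `|M| < e.
Proof.
move=> e_gt0 M_lt.
have : ball (0 : 'M[R]_(p, q)) e M.
  by split=> // i j; rewrite mxE /ball /= sub0r normrN.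
by rewrite mx_norm_ball /ball_ /= sub0r normrN.
Qed.

Lemma cvec_continuous_at (n m : nat) (c : 'cV[R]_n -> 'cV[R]_m) (xs : 'cV[R]_n) :
  (forall i, {for xs, continuous (ccomp c i)}) ->
  forall eps : R, 0 < eps ->
  exists2 d : R, 0 < d & forall x, `|x - xs| < d -> `|c x - c xs| < eps.
Proof.
move=> c_cont eps eps_gt0.
have : \forall x \near xs, forall i, `|c x i 0 - c xs i 0| < eps.
  apply: (@filter_forall _ 'I_m (fun i x => `|c x i 0 - c xs i 0| < eps) (nbhs xs) _) => i.
  by have /cvgr_distC_lt /(_ eps eps_gt0) := c_cont i.
case/nbhs_normP=> d d_gt0 near_xs; exists d => // x x_near.
apply: mx_norm_lt => // i j; rewrite (ord1 j) !mxE.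
by apply: near_xs; rewrite /ball_ /= distrC.
Qed.
End MatrixNorm.

Section ChainRule.
Variables (R : realType) (V : normedModType R).

Lemma derive_along_line (g : V -> R) (x v : V) :
  'D_v g x = 'D_1 (fun t : R => g (t *: v + x)) 0.
Proof.
rewrite /derive; set lhs := fun t => t^-1 *: _; set rhs := fun t => t^-1 *: _.
suff -> : lhs = rhs by [].
by apply/funext => t; rewrite /lhs /rhs /= addr0 scale0r add0r [_%:A]mulr1.
Qed.

Lemma derive_comp_dir (g : V -> R) (h : R -> R) (x v : V) :
  derivable g x v -> derivable h (g x) 1 ->
  derivable (h \o g) x v /\ 'D_v (h \o g) x = 'D_1 h (g x) * 'D_v g x.
Proof.
move=> dg dh; pose G t := g (t *: v + x).
have dG : derivable G 0 1 by move/derivable1P: dg.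
have G0 : G 0 = g x by rewrite /G scale0r add0r.
have dhG : derivable h (G 0) 1 by rewrite G0.
split.
  apply/derivable1P/derivable1_diffP; change (differentiable (h \o G) 0).
  by apply: differentiable_comp; exact/derivable1_diffP.
rewrite derive_along_line (derive_along_line g) -/G.
change ('D_1 (h \o G) 0 = 'D_1 h (g x) * 'D_1 G 0).
by rewrite -!derive1E (derive1_comp dG dhG) G0.
Qed.
End ChainRule.

Section Penalty.
Variable R : realType.

Lemma penalty_derive (W : R -> R) (mu s z : R) :
  derivable W z 1 -> 0 < W z ->
  let g := fun a => mu * ln (W a) + s * (a - W a) in
  derivable g z 1 /\ 'D_1 g z = s + 'D_1 W z * (mu / W z - s).
Proof.
move=> dW Wz_gt0 g.
have dln : derivable (@ln R) (W z) 1 by apply: ex_derive; exact: is_derive1_ln.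
have [dlnW DlnW] := derive_comp_dir dW dln.
have did : derivable (@id R) z 1 by exact: derivable_id.
have dsub : derivable (id - W) z 1 by exact: derivableB.
have -> : g = cst mu * (@ln R \o W) + cst s * (id - W) by apply/funext.
have d1 : derivable (cst mu * (@ln R \o W)) z 1.
  by apply: derivableM; [exact: derivable_cst | exact: dlnW].
have d2 : derivable (cst s * (id - W)) z 1.
  by apply: derivableM; [exact: derivable_cst | exact: dsub].
split; first exact: derivableD.
rewrite (deriveD d1 d2) (deriveM (derivable_cst _ _ _) dlnW).
rewrite (deriveM (derivable_cst _ _ _) dsub) (deriveB did dW) DlnW derive_id.
have [_ ->] := is_derive1_ln Wz_gt0.
rewrite !derive_cst /= !scaler0 !addr0 /GRing.scale /=; field.
by rewrite gt_eqF.
Qed.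

(* w is positive: it is the positive root of rho w^2 + (b - rho a) w - mu. *)
Lemma w_gt0 (a b mu rho : R) : 0 < mu -> 0 < rho -> 0 < w a b mu rho.
Proof.
move=> mu_gt0 rho_gt0; rewrite /w divr_gt0 ?mulr_gt0 // subr_gt0.
set t := b - rho * a.
apply: (le_lt_trans (ler_norm t)).
rewrite -sqrtr_sqr ltr_sqrt; last by rewrite ltr_wpDl ?sqr_ge0 // !mulr_gt0.
by rewrite ltrDl !mulr_gt0.
Qed.

(* Complementarity: z is the fixed point of w(., mu/z) for every z > 0, since
   with b = mu/z the radicand (b - rho z)^2 + 4 rho mu is (b + rho z)^2. *)
Lemma w_fixpoint (mu rho z : R) : 0 < mu -> 0 < rho -> 0 < z ->
  w z (mu / z) mu rho = z.
Proof.
move=> mu_gt0 rho_gt0 z_gt0; rewrite /w; set s := mu / z.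
have s_gt0 : 0 < s by rewrite divr_gt0.
have -> : (s - rho * z) ^+ 2 + 4 * rho * mu = (s + rho * z) ^+ 2.
  have mu_sz : mu = s * z by rewrite mulfVK ?gt_eqF.
  by rewrite mu_sz; ring.
rewrite sqrtr_sqr ger0_norm; last by rewrite addr_ge0 // ltW // mulr_gt0.
by field; rewrite gt_eqF.
Qed.

(* w is differentiable in its first argument (the radicand stays positive). *)
Lemma w_derivable (a b mu rho : R) : 0 < mu -> 0 < rho ->
  derivable (fun t => w t b mu rho) a 1.
Proof.
move=> mu_gt0 rho_gt0.
pose L : R -> R := cst b - cst rho * id.
pose q : R -> R := L ^+ 2 + cst (4 * rho * mu).
have dL : derivable L a 1.
  apply: derivableB; first exact: derivable_cst.
  by apply: derivableM; [exact: derivable_cst | exact: derivable_id].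
have dq : derivable q a 1.
  by apply: derivableD; [exact: derivableX | exact: derivable_cst].
have q_gt0 : 0 < q a by rewrite /q /= ltr_wpDl ?sqr_ge0 // !mulr_gt0.
have dsqrt : derivable Num.sqrt (q a) 1.
  by apply: ex_derive; exact: is_derive1_sqrt.
have -> : (fun t => w t b mu rho) = (Num.sqrt \o q - L) * cst (2 * rho)^-1.
  by apply/funext.
apply: derivableM; last exact: derivable_cst.
by apply: derivableB; [exact: (derive_comp_dir dq dsqrt).1 | exact: dL].
Qed.

Definition MB_penalty (mu rho s a : R) : R :=
  mu * ln (w a s mu rho) + s * (a - w a s mu rho).

(* At the complementarity point a = z, s = mu/z, this term has derivative
   exactly s: the contributions through w cancel because mu / w = s there. *)
Lemma MB_penalty_derive (mu rho z : R) : 0 < mu -> 0 < rho -> 0 < z ->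
  derivable (MB_penalty mu rho (mu / z)) z 1 /\
  'D_1 (MB_penalty mu rho (mu / z)) z = mu / z.
Proof.
move=> mu_gt0 rho_gt0 z_gt0.
have wz : w z (mu / z) mu rho = z by exact: w_fixpoint.
have [dg ->] := penalty_derive mu (mu / z)
  (w_derivable (a := z) (b := mu / z) mu_gt0 rho_gt0) (w_gt0 z (mu / z) mu_gt0 rho_gt0).
by split=> //; rewrite wz subrr mulr0 addr0.
Qed.
End Penalty.

Section LocalSolutions.
Variables (R : realType) (n m : nat).
Variables (f : 'cV[R]_n -> R) (c : 'cV[R]_n -> 'cV[R]_m).
Variables (mu rho : R) (s : 'cV[R]_m).
Hypotheses (mu_gt0 : 0 < mu) (rho_gt0 : 0 < rho).

Lemma MB_feasibleP (x : 'cV[R]_n) :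
  MB_feasible c mu rho s x <->
  (forall i, w (ccomp c i x) (s i 0) mu rho = ccomp c i x).
Proof.
split=> feas i; last by rewrite feas subrr.
by apply/esym/eqP; rewrite -subr_eq0; apply/eqP.
Qed.

Lemma MB_obj_LB_obj (x : 'cV[R]_n) :
  (forall i, w (ccomp c i x) (s i 0) mu rho = ccomp c i x) ->
  MB_obj f c mu rho s x = LB_obj f mu x (c x).
Proof.
move=> fix_x; rewrite /MB_obj /LB_obj; congr (_ - _ * _).
by apply: eq_bigr => i _; rewrite fix_x.
Qed.

Lemma MB_feasible_LB_feasible (x : 'cV[R]_n) :
  MB_feasible c mu rho s x -> LB_feasible c x (c x).
Proof.
move/MB_feasibleP=> fix_x; split; last exact: subrr.
by move=> i; rewrite -[c x i 0]/(ccomp c i x) -fix_x w_gt0.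
Qed.

(* The
   neighbourhood is shrunk so that z = c(x) stays eps-close to zs = c(xs). *)
Lemma LB_local_sol_MB_local_sol (xs : 'cV[R]_n) (zs : 'cV[R]_m) :
  (forall i, {for xs, continuous (ccomp c i)}) ->
  LB_local_sol f c mu xs zs ->
  (forall i, ccomp c i xs = w (ccomp c i xs) (s i 0) mu rho) ->
  MB_local_sol f c mu rho s xs.
Proof.
move=> c_cont [[_ czs] [eps [eps_gt0 LB_min]]] fix_xs.
have c_xs : c xs = zs by apply/eqP; rewrite -subr_eq0 czs.
have feas_xs : MB_feasible c mu rho s xs by apply/MB_feasibleP => i; rewrite -fix_xs.
split=> //.
have [d d_gt0 c_near] := cvec_continuous_at c_cont eps_gt0.
exists (Num.min eps d); split=> [|x]; first by rewrite lt_min eps_gt0.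
rewrite lt_min => /andP[x_eps x_d] feas_x.
rewrite !MB_obj_LB_obj; try exact/MB_feasibleP.
rewrite c_xs; apply: LB_min => //; first by rewrite -c_xs; exact: c_near.
exact: MB_feasible_LB_feasible.
Qed.
End LocalSolutions.

Section KKTPoints.
Variables (R : realType) (n m : nat).
Variables (f : 'cV[R]_n -> R) (c : 'cV[R]_n -> 'cV[R]_m).
Variables (mu rho : R).
Hypotheses (mu_gt0 : 0 < mu) (rho_gt0 : 0 < rho).

Lemma MB_L_penalty (s : 'cV[R]_m) :
  (fun x => MB_L f c mu rho x s s) =
  f - \sum_(i < m) (MB_penalty mu rho (s i 0) \o ccomp c i).
Proof.
apply/funext => x; rewrite /MB_L fct_sumE /= /MB_penalty -[RHS]/(f x - _).
by rewrite big_split /= -mulr_sumr opprD addrA.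
Qed.

Lemma LB_KKT_multiplier (xs : 'cV[R]_n) (zs ss : 'cV[R]_m) :
  LB_KKT f c mu xs zs ss ->
  forall i, 0 < ccomp c i xs /\ ss i 0 = mu / ccomp c i xs.
Proof.
by move=> [c_xs [zs_gt0 [_ ss_mu]]] i; rewrite /ccomp c_xs ss_mu.
Qed.

Lemma LB_KKT_fixpoint (xs : 'cV[R]_n) (zs ss : 'cV[R]_m) :
  LB_KKT f c mu xs zs ss ->
  forall i, ccomp c i xs = w (ccomp c i xs) (ss i 0) mu rho.
Proof.
move=> kkt i; have [c_gt0 ->] := LB_KKT_multiplier kkt i.
by rewrite w_fixpoint.
Qed.

(* Part (2), second claim: since each penalty term has derivative s_i at
   c_i(xs), the gradient of the Lagrangian is grad f - (grad c) s, which
   vanishes by the KKT conditions of (LB). *)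
Lemma LB_KKT_grad_MB_L (xs : 'cV[R]_n) (zs ss : 'cV[R]_m) :
  (forall j, derivable f xs (ebasis R j)) ->
  (forall i j, derivable (ccomp c i) xs (ebasis R j)) ->
  LB_KKT f c mu xs zs ss ->
  grad (fun x => MB_L f c mu rho x ss ss) xs = 0.
Proof.
move=> df dc kkt; have [_ [_ [stationary _]]] := kkt.
apply/matrixP => j k; rewrite !mxE /partial MB_L_penalty.
have dterm i : derivable (MB_penalty mu rho (ss i 0) \o ccomp c i) xs (ebasis R j)
    /\ 'D_(ebasis R j) (MB_penalty mu rho (ss i 0) \o ccomp c i) xs =
       ss i 0 * partial j (ccomp c i) xs.
  have [c_gt0 ss_i] := LB_KKT_multiplier kkt i.
  have [dpen Dpen] : derivable (MB_penalty mu rho (ss i 0)) (ccomp c i xs) 1 /\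
      'D_1 (MB_penalty mu rho (ss i 0)) (ccomp c i xs) = ss i 0.
    by rewrite ss_i; exact: MB_penalty_derive.
  have [dcomp ->] := derive_comp_dir (dc i j) dpen.
  by split=> //; rewrite Dpen.
have dsum : derivable (\sum_(i < m) (MB_penalty mu rho (ss i 0) \o ccomp c i))
    xs (ebasis R j) by apply: derivable_sum => i; exact: (dterm i).1.
rewrite (deriveB (df j) dsum) derive_sum; last by move=> i; exact: (dterm i).1.
under eq_bigr do rewrite (dterm _).2.
have := congr1 (fun M : 'M[R]_(n, 1) => M j 0) stationary; rewrite !mxE.
move=> stationary_j; apply: etrans stationary_j.
by congr (_ - _); apply: eq_bigr => i _; rewrite /gradc mxE mulrC.
Qed.
End KKTPoints.

Theorem lemma2p1 (R : realType) (n m : nat)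
  (f : 'cV[R]_n -> R) (c : 'cV[R]_n -> 'cV[R]_m)
  (hf : C2 f) (hc : forall i : 'I_m, C2 (ccomp c i))
  (mu rho : R) (hmu : 0 < mu) (hrho : 0 < rho) :
  (forall (s : 'cV[R]_m) (xs : 'cV[R]_n) (zs : 'cV[R]_m),
      LB_local_sol f c mu xs zs ->
      (forall i : 'I_m, ccomp c i xs = w (ccomp c i xs) (s i 0) mu rho) ->
      MB_local_sol f c mu rho s xs) /\
  (forall (xs : 'cV[R]_n) (zs ss : 'cV[R]_m),
      LB_KKT f c mu xs zs ss ->
      (forall i : 'I_m, ccomp c i xs = w (ccomp c i xs) (ss i 0) mu rho) /\
      grad (fun x => MB_L f c mu rho x ss ss) xs = 0).
Proof.
have c_cont xs i : {for xs, continuous (ccomp c i)} := (hc i).1 xs.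
split=> [s xs zs|xs zs ss kkt].
  exact: (LB_local_sol_MB_local_sol hmu hrho (c_cont xs)).
split; first exact: (LB_KKT_fixpoint hmu hrho kkt).
apply: (LB_KKT_grad_MB_L hmu hrho _ _ kkt) => [j | i j].
- exact: hf.2.1.
- exact: (hc i).2.1.
Qed.
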